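(* Let $N\ge 4$, let $l,r$ be positive integers with $2\le l+r\le N-2$, let $\hat O\in V_{\mathcal N}$ be $(l,r)$-invertible, let $\hat X_i\in V_{\{i\}}$ ($i=1,\dots,N$), and let $\hat Y_k$ ($k=N-r,\dots,l$) be defined by $\hat Y_{N-r}=\hat X_{N-r+1}\cdots\hat X_N$ and $\hat Y_{k-1}=\bar E_{\{k-l,\dots,k-1\}}^{\{k,\dots,k+r-1\}}\bigl(E_{\{k-l,\dots,k-1\}}^{\{k,\dots,k+r\}}(\hat X_k\hat Y_k)\bigr)$ for $k=N-r,\dots,l+1$ (bar = Moore–Penrose pseudoinverse). Then for every $k=l+1,\dots,N-r$, $$E_{\{1,\dots,k-1\}}^{\{k,\dots,k+r-1\}}(\hat Y_{k-1})=E_{\{1,\dots,k-1\}}^{\{k,\dots,k+r\}}(\hat X_k\hat Y_k).$$ Moreover, for such $k$ the linear map $\phi$ from $\mathrm{ran}\bigl[E_{\{1,\dots,k-1\}}^{\{k,\dots,k+r\}}\bigr]$ to $V_{\{k-l,\dots,k-1\}}$ given by the partial trace $\mathrm{tr}_{\{1,\dots,k-l-1\}}$ is injective.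
   Context: Sites $\mathcal N=\{1,\dots,N\}$, each with Hilbert space $\mathbb C^d$. For each site $i$, $\{\hat P_i^{(\alpha)}\}_{\alpha=1,\dots,d^2}$ is a Hilbert–Schmidt-orthonormal operator basis on site $i$. For $\mathcal I\subset\mathcal N$, $V_{\mathcal I}$ is the complex span of the products $\prod_{i\in\mathcal I}\hat P_i^{(\alpha_i)}$, with Hilbert–Schmidt inner product; operators in $V_{\mathcal I}$ are identified with their tensor product with the identity on the other sites. $\mathrm{tr}_{\mathcal S}$ is the partial trace over sites in $\mathcal S$. For fixed $\hat O\in V_{\mathcal N}$ and disjoint $\mathcal I,\mathcal J\subset\mathcal N$ with $\mathcal I\cup\mathcal J$ contiguous, $E_{\mathcal I}^{\mathcal J}:V_{\mathcal J}\to V_{\mathcal I}$, $E_{\mathcal I}^{\mathcal J}(\hat X)=\mathrm{tr}_{\mathcal N\setminus\mathcal I}[\hat X\hat O]$. Definition ($(l,r)$-invertibility): $\hat O$ is $(l,r)$-invertible if for all integers $k$ with $l\le k\le N-r-1$, $\mathrm{rank}\bigl[E_{\{k-l+1,\dots,k\}}^{\{k+1,\dots,k+r\}}\bigr]=\mathrm{rank}\bigl[E_{\{1,\dots,k\}}^{\{k+1,\dots,N\}}\bigr]$. *)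

From HB Require Import structures.
From mathcomp Require Import all_boot all_order all_algebra.
Set Implicit Arguments. Unset Strict Implicit. Unset Printing Implicit Defensive.
Import Order.TTheory GRing.Theory Num.Theory.
Local Open Scope ring_scope.

(* Sites are 'I_N (site i of the paper, 1-based, is the ordinal i-1).
   A configuration (basis state of (C^d)^{tensor N}) is x : 'I_N -> 'I_d.
   An operator on the whole chain is its matrix, a function of (x, y). *)
Section Chain.
Variables (C : numClosedFieldType) (N d : nat).

Definition Config := {ffun 'I_N -> 'I_d}.
Definition Op := {ffun Config * Config -> C^o}.

Definition sites (a b : nat) : {set 'I_N} := [set i : 'I_N | (a <= i.+1 <= b)%N].

Definition opmul (A B : Op) : Op :=
  [ffun xy : Config * Config => \sum_(z : Config) A (xy.1, z) * B (z, xy.2)].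
Definition opid : Op := [ffun xy : Config * Config => ((xy.1 == xy.2)%:R : C)].

Definition hs (A B : Op) : C := \sum_(xy : Config * Config) (A xy : C)^* * (B xy : C).

(* partial trace over the sites S; the result (an operator on the complement
   of S) is identified with its tensor product with the identity on S *)
Definition ptr (S : {set 'I_N}) (A : Op) : Op :=
  [ffun xy : Config * Config => (([forall i in S, xy.1 i == xy.2 i])%:R : C) *
     \sum_(z : Config | [forall i in ~: S, z i == xy.1 i])
        A (z, [ffun i => if i \in S then z i else xy.2 i])].

Definition site_basis := 'I_N -> 'I_(d ^ 2) -> 'M[C]_d.

Definition hs_orthonormal (P : site_basis) : Prop :=
  forall (i : 'I_N) (a b : 'I_(d ^ 2)),
    \sum_(u < d) \sum_(v < d) ((P i a u v)^* * P i b u v) = ((a == b)%:R : C).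

Definition prodP (P : site_basis) (I : {set 'I_N}) (al : {ffun 'I_N -> 'I_(d ^ 2)}) : Op :=
  [ffun xy : Config * Config => \prod_(i < N)
      (if i \in I then P i (al i) (xy.1 i) (xy.2 i) else ((xy.1 i == xy.2 i)%:R : C))].

Definition VI (P : site_basis) (I : {set 'I_N}) : {vspace Op} :=
  <<[seq prodP P I al | al <- enum {ffun 'I_N -> 'I_(d ^ 2)}]>>%VS.

(* E_I^J (X) = tr_{N \ I} [X O]   (the domain V_J enters through VI P J) *)
Definition Efun (O : Op) (I : {set 'I_N}) (X : Op) : Op := ptr (~: I) (opmul X O).

Lemma Efun_linear O I : linear (Efun O I).
Proof.
move=> a X Y; apply/ffunP=> xy.
rewrite /Efun /ptr /opmul !ffunE.
under eq_bigr => z _ do rewrite ffunE.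
under [in X in _ = _ + X]eq_bigr => z _ do rewrite ffunE.
under [in X in _ = X + _]eq_bigr => z _ do rewrite ffunE.
rewrite /GRing.scale /= mulrCA -mulrDr; congr (_ * _).
rewrite mulr_sumr -big_split /=; apply: eq_bigr => z _.
rewrite mulr_sumr -big_split /=; apply: eq_bigr => w _.
by rewrite !ffunE mulrDl mulrA.
Qed.

HB.instance Definition _ O I := GRing.isLinear.Build C Op Op _ (Efun O I) (Efun_linear O I).

Definition Emap (O : Op) (I : {set 'I_N}) : 'End(Op) := linfun (Efun O I).

Definition ranE (P : site_basis) (O : Op) (I J : {set 'I_N}) : {vspace Op} :=
  (Emap O I @: VI P J)%VS.
Definition rankE (P : site_basis) (O : Op) (I J : {set 'I_N}) : nat :=
  \dim (ranE P O I J).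

Definition lr_invertible (P : site_basis) (O : Op) (l r : nat) : Prop :=
  forall k : nat, (l <= k <= N - r - 1)%N ->
    rankE P O (sites (k - l + 1) k) (sites (k + 1) (k + r))
    = rankE P O (sites 1 k) (sites (k + 1) N).

(* Moore-Penrose pseudoinverse of E_I^J : V_J -> V_I (Hilbert-Schmidt inner
   products): W = \bar E_I^J (Z)  iff  W lies in V_J and is orthogonal to
   ker E_I^J, and E_I^J W is the orthogonal projection of Z onto ran E_I^J. *)
Definition is_pinv_image (P : site_basis) (O : Op) (I J : {set 'I_N}) (Z W : Op) : Prop :=
  [/\ W \in VI P J,
      (forall K, K \in VI P J -> Efun O I K = 0 -> hs K W = 0) &
      (forall K, K \in VI P J -> hs (Efun O I K) (Z - Efun O I W) = 0)].

End Chain.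

From HB Require Import structures.
From mathcomp Require Import all_boot all_order all_algebra.
From mathcomp Require Import zify.
Set Implicit Arguments. Unset Strict Implicit. Unset Printing Implicit Defensive.
Import Order.TTheory GRing.Theory Num.Theory.
Local Open Scope ring_scope.

(* Fix k with l+1 <= k <= N-r and write I = {1..k-1}, I' = {k-l..k-1},
   S = {1..k-l-1}, so that I = S + I' and, partial traces composing,
   E_{I'}^J = tr_S o E_I^J for every J.  The core is a rank count: with
   U = E_I(V_{k..k+r}),
     rank E_{I'}^{k..k+r-1} <= dim tr_S(U) <= dim U <= rank E_I^{k..N},
   and (l,r)-invertibility at k-1 says the two ends are equal.  Hence tr_S
   is injective on U (the second claim) and E_{I'} has the same range on
   V_{k..k+r-1} as on V_{k..k+r}.  Since X_k Y_k lies in V_{k..k+r}, the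
   Moore-Penrose image Y_{k-1} then solves E_{I'}(Y_{k-1}) = E_{I'}(X_k Y_k)
   exactly, and applying injectivity of tr_S lifts this to E_I. *)

(* An abstract form of the rank count: if g = f o E and
   rank g|_A = rank E|_Bf for A <= B <= Bf, then f is injective on E(B)
   and g has the same range on A as on B. *)
Lemma factored_rank_eq (K : fieldType) (vT wT uT : vectType K)
    (E : 'Hom(vT, wT)) (f : 'Hom(wT, uT)) (A B Bf : {vspace vT}) :
  (A <= B)%VS -> (B <= Bf)%VS ->
  \dim ((f \o E) @: A) = \dim (E @: Bf) ->
  ((E @: B) :&: lker f = 0)%VS /\ ((f \o E) @: A = (f \o E) @: B)%VS.
Proof.
move=> sAB sBBf hdim.
have le_AB : (\dim ((f \o E) @: A) <= \dim ((f \o E) @: B))%N.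
  by apply/dimvS/limgS.
have le_BBf : (\dim (E @: B) <= \dim (E @: Bf))%N by apply/dimvS/limgS.
have rank_nullity := limg_ker_dim f (E @: B).
rewrite !limg_comp in le_AB hdim *.
have ker0 : ((E @: B) :&: lker f = 0)%VS.
  by apply/eqP; rewrite -dimv_eq0; lia.
split=> //; apply/eqP; rewrite eqEdim limgS ?limgS //=; lia.
Qed.

Lemma lker_cap0_inj (K : fieldType) (vT wT : vectType K)
    (f : 'Hom(vT, wT)) (U : {vspace vT}) :
  (U :&: lker f = 0)%VS -> {in U &, injective f}.
Proof.
move=> ker0 u v hu hv huv; apply/eqP; rewrite -subr_eq0.
have : u - v \in (U :&: lker f)%VS by rewrite memv_cap memvB // memv_ker linearB /= huv subrr.
by rewrite ker0 memv0.
Qed.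

Lemma lfun_span_subv (K : fieldType) (vT wT : vectType K)
    (f : 'Hom(vT, wT)) (X : seq vT) (U : {vspace wT}) :
  {in X, forall x, f x \in U} -> {in <<X>>%VS, forall v, f v \in U}.
Proof.
move=> hX v hv; have : f v \in (f @: <<X>>)%VS by apply: memv_img.
by rewrite limg_span; apply/subvP/span_subvP => _ /mapP[x hx ->]; apply: hX.
Qed.

Section Operators.
Variables (C : numClosedFieldType) (N d : nat).
Local Notation Op := (Op C N d).
Local Notation Config := (Config N d).

Lemma hs_eq0 (A : Op) : hs A A = 0 -> A = 0.
Proof.
rewrite /hs => /eqP; rewrite psumr_eq0 => [/allP hA|xy _]; last first.
  by rewrite mulrC -normCK exprn_ge0.
apply/ffunP=> xy; have := hA xy (mem_index_enum _); rewrite implyTb mulrC -normCK.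
by rewrite expf_eq0 /= normr_eq0 ffunE => /eqP.
Qed.

Lemma ptr_ptr (S1 S2 : {set 'I_N}) (A : Op) : [disjoint S1 & S2] ->
  ptr S1 (ptr S2 A) = ptr (S1 :|: S2) A.
Proof.
move=> dis; have nS2 i : i \in S1 -> i \notin S2 by move=> /(disjointFr dis) ->.
apply/ffunP=> [[x y]]; rewrite !ffunE /=.
set b1 := [forall i in S1, _]; set b2 := [forall i in S2, x i == y i].
have -> : [forall i in S1 :|: S2, x i == y i] = b1 && b2.
  apply/forallP/andP=> [h|[/forallP h1 /forallP h2] i].
    by split; apply/forallP=> i; apply/implyP=> hi; have := h i; rewrite !inE hi ?orbT.
  rewrite inE; apply/implyP=> /orP[hi|hi]; [exact: (implyP (h1 i)) | exact: (implyP (h2 i))].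
under eq_bigr => u hu.
  rewrite ffunE /=.
  have -> : [forall i in S2, u i == [ffun i => if i \in S1 then u i else y i] i] = b2.
    apply: eq_forallb => i; rewrite ffunE; case: (boolP (i \in S2)) => //= hi.
    have hi1 : i \notin S1 by apply/negP => /nS2; rewrite hi.
    by rewrite (negbTE hi1); move/forallP: hu => /(_ i); rewrite inE hi1 /= => /eqP ->.
  over.
rewrite /= -mulr_sumr mulrA -natrM mulnb; congr (_ * _); symmetry.
(* regroup the configurations by their restriction to S1 *)
rewrite (partition_big (fun z : Config => [ffun i => if i \in S1 then z i else x i])
   (fun u : Config => [forall i in ~: S1, u i == x i])) /=; last first.
  by move=> z _; apply/forallP=> i; apply/implyP; rewrite inE ffunE => /negbTE ->.
apply: eq_bigr => u hu; apply: eq_big => [z|z].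
  apply/andP/forallP=> [[/forallP hz /eqP <-] i|hz].
    apply/implyP; rewrite inE ffunE; case: ifP=> //= hi1 hi2.
    by have := hz i; rewrite !inE hi1 (negbTE hi2) /= => /eqP ->.
  split.
    apply/forallP=> i; apply/implyP; rewrite !inE negb_or => /andP[h1 h2].
    have := hz i; rewrite inE h2 => /eqP ->.
    by move/forallP: hu => /(_ i); rewrite inE h1.
  apply/eqP/ffunP=> i; rewrite ffunE; case: ifP => hi1.
    by have := hz i; rewrite inE (nS2 _ hi1) => /eqP ->.
  by move/forallP: hu => /(_ i); rewrite inE hi1 => /eqP ->.
move=> /andP[_ /eqP hu']; congr (A (z, _)); apply/ffunP=> i; rewrite !ffunE inE.
case: (boolP (i \in S1)) => hi1 /=; last by case: (i \in S2).
by rewrite (negbTE (nS2 _ hi1)) -hu' ffunE hi1.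
Qed.

Lemma ptr_is_linear (S : {set 'I_N}) : linear (@ptr C N d S).
Proof.
move=> a A B; apply/ffunP=> xy; rewrite /ptr !ffunE.
rewrite /GRing.scale /= mulrCA -mulrDr; congr (_ * _).
by rewrite mulr_sumr -big_split /=; apply: eq_bigr => z _; rewrite !ffunE.
Qed.
HB.instance Definition _ S :=
  GRing.isLinear.Build C Op Op _ (@ptr C N d S) (ptr_is_linear S).

Definition lmulop (A B : Op) : Op := opmul A B.
Definition rmulop (B A : Op) : Op := opmul A B.

Lemma lmulop_is_linear A : linear (lmulop A).
Proof.
move=> a B B'; apply/ffunP=> xy; rewrite /lmulop /opmul !ffunE.
rewrite /GRing.scale /= mulr_sumr -big_split /=; apply: eq_bigr => z _.
by rewrite !ffunE mulrDr mulrCA.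
Qed.
HB.instance Definition _ A :=
  GRing.isLinear.Build C Op Op _ (lmulop A) (lmulop_is_linear A).

Lemma rmulop_is_linear B : linear (rmulop B).
Proof.
move=> a A A'; apply/ffunP=> xy; rewrite /rmulop /opmul !ffunE.
rewrite /GRing.scale /= mulr_sumr -big_split /=; apply: eq_bigr => z _.
by rewrite !ffunE mulrDl mulrA.
Qed.
HB.instance Definition _ B :=
  GRing.isLinear.Build C Op Op _ (rmulop B) (rmulop_is_linear B).

End Operators.

Section Locality.
Variables (C : numClosedFieldType) (N d : nat) (P : site_basis C N d).
Hypothesis hP : hs_orthonormal P.
Local Notation Op := (Op C N d).
Local Notation Config := (Config N d).

Definition site_family (i : 'I_N) : (d ^ 2).-tuple 'M[C]_d := [tuple P i a | a < d ^ 2].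

(* Orthonormality makes each site family a basis of the d x d matrices. *)
Lemma site_family_full (i : 'I_N) : (<<site_family i>> = fullv)%VS.
Proof.
have nthP (a : 'I_(d ^ 2)) : (site_family i)`_a = P i a by rewrite -tnth_nth tnth_mktuple.
have free_fam : free (site_family i).
  apply/freeP=> k hk b.
  (* pair the vanishing combination with the basis element P i b *)
  have : \sum_(u < d) \sum_(v < d) ((P i b u v)^* * (\sum_a k a *: (site_family i)`_a) u v) = 0.
    by rewrite hk; apply: big1 => u _; apply: big1 => v _; rewrite mxE mulr0.
  rewrite (eq_bigr (fun u => \sum_a k a * \sum_(v < d) ((P i b u v)^* * P i a u v))); last first.
    move=> u _; symmetry; under eq_bigr => a _ do rewrite mulr_sumr.
    rewrite exchange_big /=; apply: eq_bigr => v _.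
    rewrite summxE mulr_sumr; apply: eq_bigr => a _.
    by rewrite mxE nthP mulrCA.
  rewrite exchange_big /= (eq_bigr (fun a => k a * (b == a)%:R)); last first.
    by move=> a _; rewrite -mulr_sumr hP.
  rewrite (bigD1 b) //= eqxx mulr1 big1 ?addr0 // => a hab.
  by rewrite eq_sym (negbTE hab) mulr0.
apply/eqP; rewrite eqEdim subvf /= dimvf (eqnP free_fam) size_tuple.
by rewrite /dim /= expnS expn1.
Qed.

Definition id_coord (i : 'I_N) (a : 'I_(d ^ 2)) : C :=
  coord (site_family i) a (1%:M : 'M[C]_d).

Lemma site_identity (i : 'I_N) :
  (1%:M : 'M[C]_d) = \sum_a id_coord i a *: P i a.
Proof.
have : (1%:M : 'M[C]_d) \in <<site_family i>>%VS by rewrite site_family_full memvf.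
move/coord_span => {1}->; apply: eq_bigr => a _.
by rewrite -tnth_nth tnth_mktuple.
Qed.

Lemma prodP_in (I : {set 'I_N}) al : prodP P I al \in VI P I.
Proof. by apply: memv_span; apply: map_f; rewrite mem_enum. Qed.

(* A product supported on J is a combination of products supported on a
   larger J': expand the identity on each site of J' \ J. *)
Lemma prodP_in_VI (J J' : {set 'I_N}) al :
  J \subset J' -> prodP P J al \in VI P J'.
Proof.
move=> sJ.
pose cf i a := if i \in J then ((a == al i)%:R : C)
               else if i \in J' then id_coord i a else (a == al i)%:R.
suff -> : prodP P J al =
    \sum_(f : {ffun 'I_N -> 'I_(d ^ 2)}) (\prod_i cf i (f i)) *: prodP P J' f.
  by apply: memv_suml => f _; apply/memvZ/prodP_in.
apply/ffunP=> xy; rewrite sum_ffunE ffunE.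
pose F i a := cf i a * (if i \in J' then P i a (xy.1 i) (xy.2 i)
                        else ((xy.1 i == xy.2 i)%:R : C)).
have delta_sum i (G : 'I_(d ^ 2) -> C) : \sum_a (a == al i)%:R * G a = G (al i).
  rewrite (bigD1 (al i)) //= eqxx mul1r big1 ?addr0 // => a /negbTE ->.
  by rewrite mul0r.
rewrite (eq_bigr (fun i => \sum_a F i a)); last first.
  move=> i _; rewrite /F /cf; case: (boolP (i \in J)) => hJ.
    by rewrite (subsetP sJ _ hJ) delta_sum.
  case: (boolP (i \in J')) => hJ'; last by rewrite delta_sum.
  have := site_identity i => /(congr1 (fun M : 'M[C]_d => M (xy.1 i) (xy.2 i))).
  by rewrite summxE mxE => ->; apply: eq_bigr => a _; rewrite mxE.
by rewrite bigA_distr_bigA; apply: eq_bigr => f _; rewrite !ffunE /F big_split.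
Qed.

Lemma VI_sub (J J' : {set 'I_N}) : J \subset J' -> (VI P J <= VI P J')%VS.
Proof. by move=> sJ; apply/span_subvP => _ /mapP[al _ ->]; apply: prodP_in_VI. Qed.

Lemma opmul_prodP (S1 S2 : {set 'I_N}) a b : [disjoint S1 & S2] ->
  opmul (prodP P S1 a) (prodP P S2 b)
  = prodP P (S1 :|: S2) [ffun j => if j \in S1 then a j else b j].
Proof.
move=> dis; apply/ffunP=> [[x y]]; rewrite !ffunE /=.
pose H j t := (if j \in S1 then P j (a j) (x j) t else ((x j == t)%:R : C)) *
   (if j \in S2 then P j (b j) t (y j) else ((t == y j)%:R : C)).
rewrite (eq_bigr (fun z : Config => \prod_j H j (z j))); last first.
  by move=> z _; rewrite !ffunE /= -big_split.
rewrite -(bigA_distr_bigA H) /=; apply: eq_bigr => j _; rewrite /H ffunE inE.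
have delta_sum (G : 'I_d -> C) s : \sum_t G t * (t == s)%:R = G s.
  rewrite (bigD1 s) //= eqxx mulr1 big1 ?addr0 // => t /negbTE ->.
  by rewrite mulr0.
case: (boolP (j \in S1)) => h1 /=; first by rewrite (disjointFr dis h1) delta_sum.
under eq_bigr => t _ do rewrite mulrC [(x j == t)]eq_sym.
by case: (j \in S2); rewrite delta_sum.
Qed.

Lemma opmul_VI (S1 S2 : {set 'I_N}) (A B : Op) :
  [disjoint S1 & S2] -> A \in VI P S1 -> B \in VI P S2 ->
  opmul A B \in VI P (S1 :|: S2).
Proof.
move=> dis hA hB.
have hprod g : g \in [seq prodP P S1 al | al <- enum {ffun 'I_N -> 'I_(d ^ 2)}] ->
    opmul g B \in VI P (S1 :|: S2).
  case/mapP=> a _ ->.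
  have := @lfun_span_subv _ _ _ (linfun (lmulop (prodP P S1 a))) _ (VI P (S1 :|: S2)) _ B hB.
  rewrite lfunE; apply=> _ /mapP[b _ ->].
  by rewrite lfunE /= /lmulop opmul_prodP //; apply: prodP_in.
have := @lfun_span_subv _ _ _ (linfun (rmulop B)) _ (VI P (S1 :|: S2)) _ A hA.
by rewrite lfunE; apply=> g hg; rewrite lfunE; apply: hprod.
Qed.

Lemma opid_VI0 : (0 < N)%N -> opid C N d \in VI P set0.
Proof.
move=> hN.
case: (pickP (@predT {ffun 'I_N -> 'I_(d ^ 2)})) => [al _|none].
  suff -> : opid C N d = prodP P set0 al by apply: prodP_in.
  apply/ffunP=> [[x y]]; rewrite !ffunE /=.
  case: eqP => [->|neq]; first by rewrite big1 // => i _; rewrite inE eqxx.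
  have [i hi] : exists i, x i != y i.
    case: (boolP [exists i, x i != y i]) => [/existsP //|].
    rewrite negb_exists => /forallP hxy; case: neq; apply/ffunP=> i.
    by have := hxy i; rewrite negbK => /eqP.
  by rewrite (bigD1 i) //= inE (negbTE hi) mul0r.
(* with no multi-index, d = 0 and there are no configurations *)
suff -> : opid C N d = 0 by apply: mem0v.
apply/ffunP=> [[x y]]; exfalso.
have hd : (0 < d ^ 2)%N by rewrite expn_gt0 (leq_ltn_trans (leq0n _) (ltn_ord (x (Ordinal hN)))).
by have := none [ffun _ => Ordinal hd].
Qed.

Lemma chain_prod_VI (X : nat -> Op) : (0 < N)%N ->
  (forall i : nat, (1 <= i <= N)%N -> X i \in VI P (sites N i i)) ->
  forall n a, (1 <= a)%N -> (a + n <= N + 1)%N ->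
  \big[@opmul C N d / opid C N d]_(a <= i < a + n) X i \in VI P (sites N a (a + n - 1)).
Proof.
move=> hN hX; elim=> [|n IH] a ha han.
  by rewrite big_geq ?addn0 //; apply: (subvP (VI_sub (sub0set _))); apply: opid_VI0.
rewrite big_ltn; last by lia.
have -> : sites N a (a + n.+1 - 1) = sites N a a :|: sites N a.+1 (a.+1 + n - 1).
  by apply/setP=> i; rewrite !inE; lia.
apply: opmul_VI; first by rewrite -setI_eq0; apply/eqP/setP=> i; rewrite !inE; lia.
  by apply: hX; lia.
by rewrite -addSnnS; apply: IH; lia.
Qed.

End Locality.

Section Recursion.
Variables (C : numClosedFieldType) (N d : nat) (P : site_basis C N d) (O : Op C N d).

(* When Z lies in the range of E_I^J, any Moore-Penrose image W of Z solves
   E_I^J W = Z exactly: the residual Z - E W is orthogonal to the range,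
   and lies in it. *)
Lemma pinv_image_exact (I J : {set 'I_N}) (Z W : Op C N d) :
  is_pinv_image P O I J Z W -> Z \in ranE P O I J -> Efun O I W = Z.
Proof.
case=> hW _ hres /memv_imgP[K hK]; rewrite lfunE /= => eZ.
have := hres (K - W) (memvB hK hW); rewrite linearB /= -eZ => /hs_eq0 /eqP.
by rewrite subr_eq0 => /eqP.
Qed.

Lemma ptr_Efun (I S : {set 'I_N}) (Z : Op C N d) : S \subset I ->
  ptr S (Efun O I Z) = Efun O (I :\: S) Z.
Proof.
move=> sSI; rewrite /Efun ptr_ptr; last first.
  by rewrite disjoints_subset setCK.
by congr ptr; rewrite setDE setCI setCK setUC.
Qed.

(* The recursion keeps Y_k supported on the r sites to the right of k:
   for k < N - r because Y_k is a pseudoinverse image into V_{k+1..k+r},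
   and for k = N - r because Y_{N-r} = X_{N-r+1} ... X_N. *)
Lemma Y_support (l r : nat) (X Y : nat -> Op C N d) :
  (0 < N)%N -> (r <= N)%N -> hs_orthonormal P ->
  (forall i : nat, (1 <= i <= N)%N -> X i \in VI P (sites N i i)) ->
  Y (N - r)%N = \big[@opmul C N d / opid C N d]_(N - r + 1 <= i < N + 1) X i ->
  (forall k : nat, (l + 1 <= k <= N - r)%N ->
     is_pinv_image P O (sites N (k - l) (k - 1)) (sites N k (k + r - 1))
       (Efun O (sites N (k - l) (k - 1)) (opmul (X k) (Y k))) (Y (k - 1)%N)) ->
  forall k : nat, (l <= k <= N - r)%N -> Y k \in VI P (sites N (k + 1) (k + r)).
Proof.
move=> hN hrN hP hX hYN hpinv k hk.
have [lt_k|ge_k] := ltnP k (N - r).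
  have [hYk _ _] := hpinv k.+1 ltac:(lia).
  have e1 : (k.+1 - 1 = k)%N by lia.
  have e2 : (k.+1 + r - 1 = k + r)%N by lia.
  by rewrite e1 e2 in hYk; rewrite addn1.
have -> : k = (N - r)%N by lia.
rewrite hYN (_ : (N + 1 = N - r + 1 + r)%N); last by lia.
rewrite (_ : (N - r + r = N - r + 1 + r - 1)%N); last by lia.
by apply: chain_prod_VI => //; lia.
Qed.

Lemma ptr_Efun_sites (l k : nat) (Z : Op C N d) : (l < k)%N ->
  ptr (sites N 1 (k - l - 1)) (Efun O (sites N 1 (k - 1)) Z)
  = Efun O (sites N (k - l) (k - 1)) Z.
Proof.
move=> lt_lk; rewrite ptr_Efun; last by apply/subsetP=> i; rewrite !inE; lia.
by congr Efun; apply/setP=> i; rewrite !inE; lia.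
Qed.

Lemma lr_invertible_trace_inj (l r k : nat) :
  hs_orthonormal P -> lr_invertible P O l r -> (l + 1 <= k <= N - r)%N ->
  {in ranE P O (sites N 1 (k - 1)) (sites N k (k + r)) &,
     injective (ptr (sites N 1 (k - l - 1)))}
  /\ ranE P O (sites N (k - l) (k - 1)) (sites N k (k + r - 1))
     = ranE P O (sites N (k - l) (k - 1)) (sites N k (k + r)).
Proof.
move=> hP hinv hk.
set S := sites N 1 (k - l - 1); set J := sites N k (k + r - 1).
set J' := sites N k (k + r); set Jf := sites N k N.
have factor : (linfun (ptr S) \o Emap O (sites N 1 (k - 1)))%VF
              = Emap O (sites N (k - l) (k - 1)).
  by apply/lfunP=> Z; rewrite comp_lfunE !lfunE /= ptr_Efun_sites //; lia.
have rank_eq : rankE P O (sites N (k - l) (k - 1)) J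
               = rankE P O (sites N 1 (k - 1)) Jf.
  have e1 : (k - 1 - l + 1 = k - l)%N by lia.
  have e2 : (k - 1 + 1 = k)%N by lia.
  have e3 : (k - 1 + r = k + r - 1)%N by lia.
  by have := hinv (k - 1)%N ltac:(lia); rewrite e1 e2 e3.
have sJJ' : J \subset J' by apply/subsetP=> i; rewrite !inE; lia.
have sJ'Jf : J' \subset Jf by apply/subsetP=> i; rewrite !inE; lia.
have [ker0 ran_eq] := factored_rank_eq (VI_sub hP sJJ') (VI_sub hP sJ'Jf)
  (etrans (congr1 (fun g => \dim (g @: VI P J)%VS) factor) rank_eq).
split; last by rewrite /ranE -factor.
by move=> u v hu hv; rewrite -!(lfunE (ptr S)); apply: lker_cap0_inj ker0 u v hu hv.
Qed.

Lemma XY_support (l r : nat) (X Y : nat -> Op C N d) :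
  (0 < N)%N -> hs_orthonormal P ->
  (forall i : nat, (1 <= i <= N)%N -> X i \in VI P (sites N i i)) ->
  Y (N - r)%N = \big[@opmul C N d / opid C N d]_(N - r + 1 <= i < N + 1) X i ->
  (forall k : nat, (l + 1 <= k <= N - r)%N ->
     is_pinv_image P O (sites N (k - l) (k - 1)) (sites N k (k + r - 1))
       (Efun O (sites N (k - l) (k - 1)) (opmul (X k) (Y k))) (Y (k - 1)%N)) ->
  forall k : nat, (1 <= k)%N -> (l <= k <= N - r)%N ->
    opmul (X k) (Y k) \in VI P (sites N k (k + r)).
Proof.
move=> hN hP hX hYN hpinv k hk1 hk.
rewrite (_ : sites N k (k + r) = sites N k k :|: sites N (k + 1) (k + r)); last first.
  by apply/setP=> i; rewrite !inE; lia.
apply: opmul_VI; first by rewrite -setI_eq0; apply/eqP/setP=> i; rewrite !inE; lia.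
  by apply: hX; lia.
by apply: (Y_support hN _ hP hX hYN hpinv); lia.
Qed.

End Recursion.

Theorem mainTheorem2 (C : numClosedFieldType) (N d l r : nat)
  (P : site_basis C N d) (O : Op C N d) (X Y : nat -> Op C N d) :
  (4 <= N)%N -> (0 < l)%N -> (0 < r)%N -> (2 <= l + r <= N - 2)%N ->
  hs_orthonormal P ->
  O \in VI P [set: 'I_N] ->
  lr_invertible P O l r ->
  (forall i : nat, (1 <= i <= N)%N -> X i \in VI P (sites N i i)) ->
  Y (N - r)%N = \big[@opmul C N d / opid C N d]_(N - r + 1 <= i < N + 1) X i ->
  (forall k : nat, (l + 1 <= k <= N - r)%N ->
     is_pinv_image P O (sites N (k - l) (k - 1)) (sites N k (k + r - 1))
       (Efun O (sites N (k - l) (k - 1)) (opmul (X k) (Y k)))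
       (Y (k - 1)%N)) ->
  forall k : nat, (l + 1 <= k <= N - r)%N ->
    Efun O (sites N 1 (k - 1)) (Y (k - 1)%N)
      = Efun O (sites N 1 (k - 1)) (opmul (X k) (Y k))
    /\ {in ranE P O (sites N 1 (k - 1)) (sites N k (k + r)) &,
          injective (ptr (sites N 1 (k - l - 1)))}.
Proof.
move=> hN _ _ _ hP _ hinv hX hYN hpinv k hk.
have [inj ran_eq] := lr_invertible_trace_inj hP hinv hk.
have hZ := XY_support (ltac:(lia) : (0 < N)%N) hP hX hYN hpinv
  (ltac:(lia) : (1 <= k)%N) (ltac:(lia) : (l <= k <= N - r)%N).
(* X_k Y_k is in the domain V_{k..k+r}, so E_{k-l..k-1}(X_k Y_k) is in the
   range on V_{k..k+r-1}, where the pseudoinverse is an exact preimage *)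
have hW : Efun O (sites N (k - l) (k - 1)) (Y (k - 1)%N)
        = Efun O (sites N (k - l) (k - 1)) (opmul (X k) (Y k)).
  apply: pinv_image_exact (hpinv k hk) _.
  by rewrite ran_eq -(lfunE (Efun O _)) memv_img.
split=> //.
have [hY _ _] := hpinv k hk.
have sJJ' : sites N k (k + r - 1) \subset sites N k (k + r).
  by apply/subsetP=> i; rewrite !inE; lia.
apply: inj.
- by rewrite -(lfunE (Efun O _)) memv_img // (subvP (VI_sub hP sJJ')).
- by rewrite -(lfunE (Efun O _)) memv_img.
- by rewrite !ptr_Efun_sites ?hW //; lia.
Qed.
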